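(* Let $a\in(0,1)$ and $p(z)=(z-a)\prod_{k=1}^{8}(z-z_k)$ with $|z_k|\le1$ and $z_k\ne a$, and write $p'(z)=9\prod_{j=1}^{8}(z-\zeta_j)$. Let $r_k=|a-z_k|$, $\rho_j=|a-\zeta_j|$, and suppose $\rho_j\ge1$ for all $j$. Then $$\prod_{j=1}^{8}|\zeta_j|\le\Big(\prod_{j=1}^{8}\rho_j\Big)\Big(a^2-1+\frac14\sum_{k=1}^{8}\frac{|z_k|^2-a^2}{r_k^2}\Big)^4.$$ *)

(* Complex numbers are modelled by an arbitrary
   numClosedFieldType C (algebraically closed field with conjugation/norm,
   e.g. algC); the statement is first-order so this covers the complex case. *)
From HB Require Import structures.
From mathcomp Require Import all_boot all_order all_algebra.
Set Implicit Arguments. Unset Strict Implicit. Unset Printing Implicit Defensive.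
Import Order.TTheory GRing.Theory Num.Theory.
Local Open Scope ring_scope.

Definition pol9 (C : numClosedFieldType) (a : C) (z : 'I_8 -> C) : {poly C} :=
  ('X - a%:P) * \prod_(k < 8) ('X - (z k)%:P).

From HB Require Import structures.
From mathcomp Require Import all_boot all_order all_algebra.
From mathcomp Require Import ring.
Import Order.TTheory GRing.Theory Num.Theory.
Local Open Scope ring_scope.

(* Let p = (X - a) q with q = prod_k (X - z_k), and p' = c Q with
   Q = prod_j (X - zeta_j).  Differentiating twice and evaluating at a gives
   c Q(a) = q(a) and c Q'(a) = 2 q'(a); dividing, via the logarithmic
   derivative of a product of linear factors, yields the identity
     sum_j 1/(a - zeta_j) = 2 sum_k 1/(a - z_k).
   For real a, the quantities (|x|/|a-x|)^2 and (|x|^2 - a^2)/|a-x|^2 are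
   affine in 1/(a-x) + conj(1/(a-x)) (and in 1/|a-x|^2); summing them and
   using the identity together with rho_j >= 1 bounds
     sum_j (|zeta_j|/rho_j)^2 <= n (a^2 - 1) + 2 sum_k (|z_k|^2 - a^2)/r_k^2,
   i.e. by 8 M for n = 8, where M is the base of the fourth power in the
   theorem.  The AM-GM inequality turns this into
   prod_j (|zeta_j|/rho_j)^2 <= M^8, and taking square roots and multiplying
   by prod_j rho_j gives the theorem. *)

Lemma horner_deriv_prod_XsubC (F : fieldType) (I : Type) (r : seq I)
    (c : I -> F) (x : F) :
  (forall i, x - c i != 0) ->
  (\prod_(i <- r) ('X - (c i)%:P))^`().[x] =
  (\prod_(i <- r) ('X - (c i)%:P)).[x] * \sum_(i <- r) (x - c i)^-1.
Proof.
move=> xc_neq0; elim: r => [|i r IHr]; first by rewrite !big_nil derivC !hornerE ?mul0r.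
rewrite !big_cons derivM derivXsubC mul1r !(hornerD, hornerM) IHr !hornerE.
move: (xc_neq0 i) (\prod_(j <- r) _).[x] (\sum_(j <- r) _) => /= d_neq0 P S.
by field.
Qed.

Lemma horner_deriv_mulXsubC {R : comNzRingType} (a : R) (q : {poly R}) :
  (('X - a%:P) * q)^`().[a] = q.[a].
Proof. by rewrite derivM derivXsubC mul1r !hornerE subrr mul0r addr0. Qed.

Lemma horner_deriv2_mulXsubC {R : comNzRingType} (a : R) (q : {poly R}) :
  (('X - a%:P) * q)^`()^`().[a] = q^`().[a] *+ 2.
Proof.
rewrite derivM derivXsubC mul1r derivD derivM derivXsubC mul1r.
by rewrite !hornerE subrr !mul0r /= addr0 mulr2n.
Qed.

Lemma sum_inv_sub_critical_points {F : fieldType} {I J : finType} {a c : F}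
    {z : I -> F} {zeta : J -> F} :
  (forall k, a - z k != 0) -> (forall j, a - zeta j != 0) ->
  (('X - a%:P) * \prod_k ('X - (z k)%:P))^`() =
    c *: \prod_j ('X - (zeta j)%:P) ->
  \sum_j (a - zeta j)^-1 = 2%:R * \sum_k (a - z k)^-1.
Proof.
set q := \prod_k _; set Q := \prod_j _ => az_neq0 azeta_neq0 deriv_p.
have Qa : c * Q.[a] = q.[a] by rewrite -(horner_deriv_mulXsubC a q) deriv_p hornerZ.
have Q'a : c * Q^`().[a] = q^`().[a] *+ 2.
  by rewrite -(horner_deriv2_mulXsubC a q) deriv_p derivZ hornerZ.
have qa_neq0 : q.[a] != 0.
  by rewrite horner_prod; apply/prodf_neq0 => k _; rewrite !hornerE.
apply: (mulfI qa_neq0); rewrite -{1}Qa -mulrA -horner_deriv_prod_XsubC //.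
by rewrite Q'a horner_deriv_prod_XsubC //; ring.
Qed.

Lemma sqr_norm_ratio_sub {C : numClosedFieldType} {a : C} (x : C) :
  a \is Num.real -> a - x != 0 ->
  (`|x| / `|a - x|) ^+ 2 =
    a ^+ 2 / `|a - x| ^+ 2 - a * ((a - x)^-1 + ((a - x)^*)^-1) + 1.
Proof.
move=> a_real; move: (a - x) (subKr a x) => u <- u_neq0.
have conj_u_neq0 : u^* != 0 by rewrite conjC_eq0.
rewrite expr_div_n !normCK rmorphB /= (conj_Creal a_real).
by field; apply/andP.
Qed.

Lemma sqr_norm_sub_ratio {C : numClosedFieldType} {a : C} (x : C) :
  a \is Num.real -> a - x != 0 ->
  (`|x| ^+ 2 - a ^+ 2) / `|a - x| ^+ 2 = 1 - a * ((a - x)^-1 + ((a - x)^*)^-1).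
Proof.
move=> a_real; move: (a - x) (subKr a x) => u <- u_neq0.
have conj_u_neq0 : u^* != 0 by rewrite conjC_eq0.
rewrite !normCK rmorphB /= (conj_Creal a_real).
by field; apply/andP.
Qed.

Lemma sum_conj_inv (C : numClosedFieldType) (I : finType) (u : I -> C) :
  \sum_i ((u i)^*)^-1 = (\sum_i (u i)^-1)^*.
Proof. by rewrite rmorph_sum; apply: eq_bigr => i _; rewrite fmorphV. Qed.

Lemma sum_sqr_norm_ratio_le (C : numClosedFieldType) (n : nat) (a : C)
    (z zeta : 'I_n -> C) :
  a \is Num.real -> (forall k, a - z k != 0) ->
  (forall j, 1 <= `|a - zeta j|) ->
  \sum_j (a - zeta j)^-1 = 2%:R * \sum_k (a - z k)^-1 ->
  \sum_j (`|zeta j| / `|a - zeta j|) ^+ 2 <=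
    n%:R * (a ^+ 2 - 1) +
    2%:R * \sum_k ((`|z k| ^+ 2 - a ^+ 2) / `|a - z k| ^+ 2).
Proof.
move=> a_real az_neq0 rho_ge1 crit.
have azeta_neq0 j : a - zeta j != 0.
  by rewrite -normr_gt0; apply: lt_le_trans (rho_ge1 j).
have inv_rho_le : \sum_j `|a - zeta j| ^-2 <= n%:R.
  rewrite -[n in leRHS]card_ord -sumr_const; apply: ler_sum => j _.
  by rewrite invf_le1 ?exprn_ege1 // exprn_gt0 // (lt_le_trans ltr01).
rewrite (eq_bigr _ (fun j _ => sqr_norm_ratio_sub _ a_real (azeta_neq0 j))).
rewrite (eq_bigr _ (fun k _ => sqr_norm_sub_ratio _ a_real (az_neq0 k))).
rewrite !big_split /= !sumrN -!mulr_sumr !big_split /= !sumr_const !card_ord.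
rewrite !sum_conj_inv crit rmorphM /= conjC_nat -subr_ge0.
(* Once the identity is substituted, the slack is a^2 (n - sum_j rho_j^-2). *)
set T := \sum_k _; set R := \sum_j _.
have -> : n%:R * (a ^+ 2 - 1) + 2%:R * (n%:R - a * (T + T^*)) -
    (a ^+ 2 * R - a * (2%:R * T + 2%:R * T^*) + n%:R) = a ^+ 2 * (n%:R - R).
  by ring.
by rewrite mulr_ge0 -?realEsqr // subr_ge0.
Qed.

Lemma prod_le_pow_of_sum_le (R : numFieldType) (n : nat) (x : 'I_n -> R)
    (M : R) :
  (forall i, 0 <= x i) -> \sum_i x i <= n%:R * M -> \prod_i x i <= M ^+ n.
Proof.
move=> x_ge0 sum_le; have := (leif_AGM (fun i (_ : i \in 'I_n) => x_ge0 i)).1.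
rewrite card_ord; case: n => [|n] in x x_ge0 sum_le *; first by rewrite !expr0.
move/le_trans; apply; apply: lerXn2r; rewrite ?nnegrE ?divr_ge0 ?sumr_ge0 //.
- by rewrite -(pmulr_rge0 _ (ltr0Sn R n)); apply: le_trans sum_le; rewrite sumr_ge0.
- by rewrite ler_pdivrMr // mulrC.
Qed.

Theorem lemma3p11 (C : numClosedFieldType) (a : C) (z zeta : 'I_8 -> C)
  (ha : a \is Num.real) (ha0 : 0 < a) (ha1 : a < 1)
  (hz : forall k, `|z k| <= 1) (hza : forall k, z k != a)
  (hderiv : (pol9 a z)^`() = 9%:R *: \prod_(j < 8) ('X - (zeta j)%:P))
  (hrho : forall j, 1 <= `|a - zeta j|) :
  \prod_(j < 8) `|zeta j|
    <= (\prod_(j < 8) `|a - zeta j|) *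
       (a ^+ 2 - 1 + 4%:R^-1 * \sum_(k < 8) ((`|z k| ^+ 2 - a ^+ 2) / `|a - z k| ^+ 2)) ^+ 4.
Proof.
(* The bound holds for any real a. *)
have rho_gt0 j : 0 < `|a - zeta j| by apply: lt_le_trans (hrho j).
have az_neq0 k : a - z k != 0 by rewrite subr_eq0 eq_sym.
have azeta_neq0 j : a - zeta j != 0 by rewrite -normr_gt0.
have crit := sum_inv_sub_critical_points az_neq0 azeta_neq0 hderiv.
set M := _ - 1 + _; set y := fun j => `|zeta j| / `|a - zeta j|.
have y_ge0 j : 0 <= y j by rewrite divr_ge0.
have sum_y2_le : \sum_j y j ^+ 2 <= 8%:R * M.
  have -> : 8%:R * M = 8%:R * (a ^+ 2 - 1) +
      2%:R * \sum_k ((`|z k| ^+ 2 - a ^+ 2) / `|a - z k| ^+ 2).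
    by rewrite /M; field.
  exact: sum_sqr_norm_ratio_le.
have M_ge0 : 0 <= M.
  rewrite -(pmulr_rge0 _ (ltr0Sn C 7)); apply: le_trans sum_y2_le.
  by apply: sumr_ge0 => j _; rewrite exprn_ge0.
have prod_y_le : \prod_j y j <= M ^+ 4.
  have prod_y2_le : \prod_j y j ^+ 2 <= M ^+ 8.
    by apply: prod_le_pow_of_sum_le sum_y2_le => j; rewrite exprn_ge0.
  by rewrite -ler_sqr ?nnegrE ?exprn_ge0 ?prodr_ge0 // -prodrXl -exprM.
have -> : \prod_j `|zeta j| = \prod_j `|a - zeta j| * \prod_j y j.
  by rewrite -big_split; apply: eq_bigr => j _; rewrite /= mulrC divfK ?gt_eqF.
by rewrite ler_wpM2l // prodr_ge0 // => j _; rewrite ltW.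
Qed.
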